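(* Let $S=K[x_1,\ldots,x_n]$ and let $I$ be a square-free monomial ideal of $S$ of degree $2$. Then $I$ is an $f$-ideal which is not of $l$ type for any $l$ if and only if the graph $T=\overline{\tau(G(I))}$ satisfies all of: (1) for each $i\in[n]$, $d(v_i)<n-1$ in $T$; (2) $\omega(T)=2$; (3) $|E(T)|=\frac12 C_n^2$; (4) $T$ is not bipartite.
   Context: $K$ is a field; $G(I)$ is the minimal monomial generating set; ''of degree 2'' means all elements of $G(I)$ have degree 2. With $\sigma$ the bijection $x_{i_1}\cdots x_{i_k}\mapsto\{i_1,\ldots,i_k\}$, the facet complex $\delta_{\mathcal{F}}(I)$ has facets $\sigma(g)$, $g\in G(I)$, the Stanley–Reisner complex is $\delta_{\mathcal{N}}(I)=\{\sigma(g)\mid g \text{ square-free monomial},\ g\notin I\}$, and $I$ is an $f$-ideal if both have the same $f$-vector. For a nonempty proper $B\subset[n]$ with complement $\overline B$, $W_B=\{x_ix_j\mid i\ne j,\ i,j\in B \text{ or } i,j\in\overline B\}$; $I$ is of $l$ type if $W_B\subseteq G(I)$ for some $B$ with $|B|=l$. $\tau(A)$, for a set $A$ of degree-2 square-free monomials, is the graph on $v_1,\ldots,v_n$ with edge $v_iv_j$ iff $x_ix_j\in A$; $\overline{\tau(A)}$ is its complement graph, $d(v)$ is vertex degree, $\omega$ is clique number, $E(T)$ is the edge set, $C_n^2$ the binomial coefficient. *)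

From mathcomp Require Import all_boot all_order all_algebra.
Set Implicit Arguments. Unset Strict Implicit. Unset Printing Implicit Defensive.

(* A square-free monomial x_{i_1}...x_{i_k} of S = K[x_1..x_n] is identified,
   via sigma, with its support {i_1,...,i_k} : {set 'I_n}.  A square-free
   monomial ideal I of degree 2 is given by its minimal monomial generating
   set G(I) : {set {set 'I_n}} (images under sigma), all of cardinality 2. *)

Section Defs.
Variable n : nat.
Implicit Types (G : {set {set 'I_n}}) (F B : {set 'I_n}).

Definition sqfree_deg2_gens G : Prop := forall g, g \in G -> #|g| = 2.

(* a square-free monomial (with support F) lies in I iff some generator divides it *)
Definition sqfree_in_ideal G F : bool := [exists g in G, g \subset F].

Definition facet_complex G : {set {set 'I_n}} :=
  [set F : {set 'I_n} | [exists g in G, F \subset g]].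

Definition SR_complex G : {set {set 'I_n}} :=
  [set F : {set 'I_n} | ~~ sqfree_in_ideal G F].

(* f_{k-1}(D) = number of faces of cardinality k *)
Definition fnum (D : {set {set 'I_n}}) (k : nat) : nat :=
  #|[set F in D | #|F| == k]|.

Definition f_ideal G : Prop :=
  forall k, fnum (facet_complex G) k = fnum (SR_complex G) k.

Definition W_B B : {set {set 'I_n}} :=
  [set e : {set 'I_n} | (#|e| == 2) && ((e \subset B) || (e \subset ~: B))].

Definition of_l_type G (l : nat) : Prop :=
  exists B : {set 'I_n}, [/\ B != set0, B != setT, #|B| = l & W_B B \subset G].

Definition Tadj G : rel 'I_n := fun i j => (i != j) && ([set i; j] \notin G).

Definition Tdeg G (i : 'I_n) : nat := #|[set j | Tadj G i j]|.

Definition is_clique G (C : {set 'I_n}) : bool :=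
  [forall i in C, forall j in C, (i != j) ==> Tadj G i j].

Definition clique_number G : nat := \max_(C : {set 'I_n} | is_clique G C) #|C|.

Definition T_edges G : {set {set 'I_n}} :=
  [set e : {set 'I_n} | [exists i, exists j, Tadj G i j && (e == [set i; j])]].

Definition bipartite G : Prop :=
  exists A : {set 'I_n}, forall i j, Tadj G i j -> (i \in A) != (j \in A).

End Defs.

From mathcomp Require Import all_boot all_order all_algebra.
From mathcomp Require Import zify.
Set Implicit Arguments. Unset Strict Implicit. Unset Printing Implicit Defensive.

(* Since the generators are edges of K_n, the facet complex has exactly one
   empty face, the covered vertices as 1-faces, the generators as 2-faces and
   nothing above, while the Stanley-Reisner complex of I is the clique complex
   of T: one empty face, n vertices, the edges of T, and the larger cliques.
   So I is an f-ideal iff G covers every vertex (equivalently T has no vertex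
   of full degree), G and T have equally many edges, and T is triangle-free;
   and W_B is contained in G exactly when (B, ~B) is a bipartition of T. *)

Section DegreeTwo.
Variables (n : nat) (G : {set {set 'I_n}}).
Hypothesis HG : sqfree_deg2_gens G.
Implicit Types (C F : {set 'I_n}).

Lemma gen_pair g :
  g \in G -> exists i j, [/\ i != j, g = [set i; j] & [set i; j] \in G].
Proof.
move=> gG; have /cards2P[i [j [ij gE]]] : #|g| == 2 by rewrite HG.
by exists i, j; rewrite -gE.
Qed.

Lemma Tadj_sym i j : Tadj G i j = Tadj G j i.
Proof. by rewrite /Tadj eq_sym setUC. Qed.

Lemma in_T_edges e : (e \in T_edges G) = (#|e| == 2) && (e \notin G).
Proof.
apply/idP/idP.
- rewrite inE => /existsP[i /existsP[j /andP[/andP[ij nG] /eqP->]]].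
  by rewrite cards2 ij nG.
- case/andP=> /cards2P[i [j [ij ->]]] nG; rewrite inE; apply/existsP; exists i.
  by apply/existsP; exists j; rewrite /Tadj ij nG eqxx.
Qed.

Lemma card_T_edges_gens : #|T_edges G| + #|G| = 'C(n, 2).
Proof.
have pairsG : G \subset [set e : {set 'I_n} | #|e| == 2].
  by apply/subsetP=> g gG; rewrite inE HG.
have -> : T_edges G = [set e : {set 'I_n} | #|e| == 2] :\: G.
  by apply/setP=> e; rewrite in_T_edges !inE andbC.
by rewrite cardsD (setIidPr pairsG) subnK ?subset_leq_card // card_draws card_ord.
Qed.

Lemma SR_complexE : SR_complex G = [set F | is_clique G F].
Proof.
apply/setP=> F; rewrite !inE; apply/idP/idP => [notI | cF].
- apply/forall_inP=> i iF; apply/forall_inP=> j jF; apply/implyP=> ij.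
  rewrite /Tadj ij; apply: contra notI => ijG; apply/exists_inP.
  by exists [set i; j]; rewrite // subUset !sub1set iF jF.
- apply/exists_inP=> -[g /gen_pair[i [j [ij -> ijG]]]].
  rewrite subUset !sub1set => /andP[iF jF].
  by move: cF => /forall_inP/(_ i iF)/forall_inP/(_ j jF); rewrite /Tadj ij ijG.
Qed.

Lemma clique_pair i j : Tadj G i j -> is_clique G [set i; j].
Proof.
move=> Tij; apply/forall_inP=> x; rewrite !inE => /orP[]/eqP->;
apply/forall_inP=> y; rewrite !inE => /orP[]/eqP->; rewrite ?eqxx //=;
by rewrite ?Tij ?implybT // Tadj_sym Tij implybT.
Qed.

Lemma clique_small C : #|C| <= 1 -> is_clique G C.
Proof.
move=> /card_le1_eqP C1; apply/forall_inP=> i iC; apply/forall_inP=> j jC.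
by rewrite (C1 i j iC jC) eqxx.
Qed.

Lemma fnum_SR_complex_small k : k <= 1 -> fnum (SR_complex G) k = 'C(n, k).
Proof.
move=> k1; rewrite /fnum -[n in 'C(n, k)]card_ord -card_draws.
apply: eq_card => F; rewrite SR_complexE !inE.
by case: eqP => [Fk | _]; rewrite ?andbF // andbT clique_small ?Fk.
Qed.

Lemma fnum_SR_complex2 : fnum (SR_complex G) 2 = #|T_edges G|.
Proof.
rewrite /fnum; congr #|pred_of_set _|; apply/setP=> F.
rewrite in_T_edges !inE andbC; case: eqP => //= /eqP/cards2P[i [j [ij ->]]].
congr negb; apply/exists_inP/idP=> [[g /gen_pair[x [y [xy -> xyG]]] sub] | ijG].
  suff -> : [set i; j] = [set x; y] by [].
  by apply/eqP; rewrite eq_sym eqEcard sub !cards2 ij xy.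
by exists [set i; j].
Qed.

Lemma fnum_facet_complex0 : fnum (facet_complex G) 0 = (G != set0).
Proof.
rewrite /fnum; have [-> | [g gG]] := set_0Vmem G.
  rewrite eqxx; apply/eqP; rewrite cards_eq0; apply/eqP/setP=> F; rewrite !inE.
  by apply/negbTE/andP=> -[/exists_inP[g]]; rewrite inE.
have -> : G != set0 by apply/set0Pn; exists g.
rewrite /= -(cards1 (set0 : {set 'I_n})); apply: eq_card => F.
rewrite !inE cards_eq0 andbC.
by case: eqP => [-> | //]; apply/exists_inP; exists g; rewrite ?sub0set.
Qed.

Lemma fnum_facet_complex1 : fnum (facet_complex G) 1 = #|cover G|.
Proof.
rewrite /fnum -(card_imset (cover G) (@set1_inj _)); apply: eq_card => F.
rewrite !inE; apply/andP/imsetP=> [[/exists_inP[g gG Fg] /cards1P[i Fi]] | [i]].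
  by exists i => //; apply/bigcupP; exists g; rewrite // -sub1set -Fi.
move=> /bigcupP[g gG ig] ->; rewrite cards1; split=> //.
by apply/exists_inP; exists g; rewrite ?sub1set.
Qed.

Lemma fnum_facet_complex2 : fnum (facet_complex G) 2 = #|G|.
Proof.
rewrite /fnum; congr #|pred_of_set _|; apply/setP=> F; rewrite !inE.
apply/idP/idP => [/andP[/exists_inP[g gG Fg] /eqP F2] | FG].
  by suff -> : F = g; last by apply/eqP; rewrite eqEcard Fg HG ?F2.
by rewrite HG // andbT; apply/exists_inP; exists F.
Qed.

Lemma fnum_facet_complex_gt2 k : 2 < k -> fnum (facet_complex G) k = 0.
Proof.
move=> k2; apply/eqP; rewrite cards_eq0; apply/eqP/setP=> F; rewrite !inE.
apply/negbTE/andP=> -[/exists_inP[g gG Fg] /eqP Fk].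
by have := subset_leq_card Fg; rewrite (HG gG) Fk leqNgt k2.
Qed.

Lemma in_cover_pairP i :
  reflect (exists2 j, j != i & [set i; j] \in G) (i \in cover G).
Proof.
apply: (iffP bigcupP) => [[g /gen_pair[x [y [xy -> xyG]]]] | [j _ ijG]].
  rewrite !inE => /orP[]/eqP->; first by exists y; rewrite 1?eq_sym.
  by exists x; rewrite // setUC.
by exists [set i; j]; rewrite ?set21.
Qed.

Lemma Tdeg_lt_cover i : (Tdeg G i < n - 1) = (i \in cover G).
Proof.
have cardC1 : #|[set~ i]| = n - 1 by rewrite cardsC1 card_ord subn1.
have adjC1 : [set j | Tadj G i j] \subset [set~ i].
  by apply/subsetP=> j; rewrite !inE /Tadj eq_sym => /andP[].
rewrite /Tdeg -cardC1 -[_ < _]andTb -adjC1 -properEcard properE adjC1 /=.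
apply/subsetPn/in_cover_pairP => [[j] | [j ji ijG]].
  rewrite !inE /Tadj eq_sym => ij; rewrite ij negbK => ijG.
  by exists j; rewrite 1?eq_sym.
by exists j; rewrite !inE /Tadj ?ijG ?andbF.
Qed.

Lemma clique_number_eq2 : clique_number G = 2 <->
  (exists i j, Tadj G i j) /\ (forall C, is_clique G C -> #|C| <= 2).
Proof.
split=> [cl2 | [[i [j Tij]] cl_le2]].
  split=> [|C cC]; last by rewrite -cl2 (@leq_bigmax_cond _ _ (fun C => #|C|) _ cC).
  have [|C cC] := @eq_bigmax_cond _ (is_clique G) (fun C : {set 'I_n} => #|C|).
    by apply/card_gt0P; exists set0; apply: clique_small; rewrite cards0.
  rewrite -/(clique_number G) cl2 => /esym/eqP/cards2P[i [j [ij Cij]]].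
  exists i, j; move: cC => /forall_inP/(_ i)/(_ _)/forall_inP/(_ j).
  by rewrite Cij set21 set22 ij => /(_ isT isT).
apply/eqP; rewrite eqn_leq; apply/andP; split; first exact/bigmax_leqP.
have := @leq_bigmax_cond _ _ (fun C : {set 'I_n} => #|C|) _ (clique_pair Tij).
by rewrite cards2; case/andP: Tij => ->.
Qed.

Lemma W_B_subsetP B :
  W_B B \subset G <-> forall i j, Tadj G i j -> (i \in B) != (j \in B).
Proof.
split=> [WBG i j /andP[ij ijG] | cross].
  apply: contra ijG => /eqP iBjB; apply: (subsetP WBG); rewrite !inE cards2 ij.
  by rewrite !subUset !sub1set !inE -iBjB; case: (i \in B).
apply/subsetP=> e; rewrite inE => /andP[/cards2P[i [j [ij ->]]] inside].
apply/negPn/negP=> ijG; have := cross i j; rewrite /Tadj ij ijG => /(_ isT).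
by move: inside; rewrite !subUset !sub1set !inE; case: (i \in B); case: (j \in B).
Qed.

(* Without an edge [A = set0] is a bipartition, but no proper part [B] need exist. *)
Lemma bipartite_l_type i j :
  Tadj G i j -> bipartite G <-> exists l, of_l_type G l.
Proof.
move=> Tij; split=> [[A cross] | [l [B [_ _ _ /W_B_subsetP cross]]]]; last by exists B.
have iAjA := cross i j Tij; exists #|A|, A; split=> //; last exact/W_B_subsetP.
  by apply: contraTneq iAjA => ->; rewrite !inE.
by apply: contraTneq iAjA => ->; rewrite !inE.
Qed.

Lemma f_idealP : f_ideal G <->
  [/\ G != set0, cover G = [set: 'I_n], #|G| = #|T_edges G|
     & forall C, is_clique G C -> #|C| <= 2].
Proof.
split=> [fI | [G0 covT GT cl_le2] [|[|[|k]]]].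
- have f0 := fI 0; rewrite fnum_facet_complex0 fnum_SR_complex_small // bin0 in f0.
  have f1 := fI 1; rewrite fnum_facet_complex1 fnum_SR_complex_small // bin1 in f1.
  have f2 := fI 2; rewrite fnum_facet_complex2 fnum_SR_complex2 in f2.
  split=> //; first by move: f0; case: (G != set0).
    by apply/eqP; rewrite eqEcard subsetT cardsT f1 card_ord leqnn.
  move=> C cC; rewrite leqNgt; apply/negP=> C_gt2.
  have /esym/eqP := fI #|C|; rewrite fnum_facet_complex_gt2 // cards_eq0.
  by move=> /eqP/setP/(_ C); rewrite SR_complexE !inE cC eqxx.
- by rewrite fnum_facet_complex0 G0 fnum_SR_complex_small ?bin0.
- by rewrite fnum_facet_complex1 covT cardsT card_ord fnum_SR_complex_small ?bin1.
- by rewrite fnum_facet_complex2 fnum_SR_complex2.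
rewrite fnum_facet_complex_gt2 // SR_complexE; apply/esym/eqP; rewrite cards_eq0.
apply/eqP/setP=> C; rewrite !inE; apply/negbTE/andP=> -[/cl_le2 + /eqP Ck].
by rewrite Ck.
Qed.
End DegreeTwo.

Theorem lemma4p5 (K : fieldType) (n : nat) (G : {set {set 'I_n}}) :
  sqfree_deg2_gens G ->
  (f_ideal G /\ (forall l, ~ of_l_type G l)) <->
  [/\ (forall i : 'I_n, Tdeg G i < n - 1),
      clique_number G = 2,
      2 * #|T_edges G| = 'C(n, 2)
    & ~ bipartite G].
Proof.
move=> HG; have cardTG := card_T_edges_gens HG.
split=> [[/(f_idealP HG)[G0 covT GT cl_le2] not_l] | [deg cl2 TE not_bip]].
  have /set0Pn[g gG] := G0.
  have n2 : 2 <= n by rewrite -(HG g gG) -[n in _ <= n]card_ord max_card.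
  have /card_gt0P[e] : 0 < #|T_edges G| by have := bin_gt0 n 2; rewrite n2; lia.
  rewrite in_T_edges => /andP[/cards2P[i [j [ij ->]]] ijG].
  have Tij : Tadj G i j by rewrite /Tadj ij ijG.
  split=> [k | | | /(bipartite_l_type Tij)[l]].
  - by rewrite (Tdeg_lt_cover HG) covT inE.
  - by apply/clique_number_eq2; split=> //; exists i, j.
  - lia.
  - exact: not_l.
have [[i [j Tij]] cl_le2] := (clique_number_eq2 G).1 cl2.
have covT : cover G = setT by apply/setP=> k; rewrite -(Tdeg_lt_cover HG) deg inE.
split=> [|l l_type]; last by apply: not_bip; apply/(bipartite_l_type Tij); exists l.
apply/(f_idealP HG); split=> //; last lia.
by have := in_setT i; rewrite -covT => /bigcupP[g gG _]; apply/set0Pn; exists g.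
Qed.
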